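(* In the three-agent investor/hedge-fund setting with restricted reports, fix the investor's report $\tilde m$. Then the unique Nash equilibrium between the two hedge funds (each choosing its report to maximize its own utility given the other's report) is $$M'_{12}=M'_{13}=\frac{c}{1-s}=\frac{a\nu-\tilde m(1-\nu)(\nu-\eta)}{\nu+(1-\nu)(\nu-\eta)},$$ where $c=\frac{a\nu-\tilde\alpha(1-\nu)}{\nu(2-\nu)}$, $s=\frac{\eta(1-\nu)}{\nu(2-\nu)}$ and $\tilde\alpha=\tilde m/(2+\rho)$.
   Context: Three agents: agent 1 (investor), agents 2 and 3 (hedge funds). Parameters $m,a\in\mathbb{R}$ and $\rho\in(-1,1)$; true beliefs $M=\begin{pmatrix}0&a&a\\ m&0&0\\ m&0&0\end{pmatrix}$ (column $i$ is agent $i$'s true belief vector $\mu_i$), $\Sigma=\begin{pmatrix}1&0&0\\0&1&\rho\\0&\rho&1\end{pmatrix}$, $\Gamma=I_3$. Restricted reports: the investor reports a common value $\tilde m$ for $M'_{21}=M'_{31}$, fund 2 reports $M'_{12}=\tilde a$, fund 3 reports $M'_{13}=\tilde b$, and all other entries of $M'$ equal the true value $0$. The stable point for $M'$ is the unique $(W,P)$ with $W=W^T$, $P^T=-P$ and $M'-P=2\Sigma W\Gamma$. Agent $i$'s utility is $g_i=w_i^T(\mu_i-Pe_i)-w_i^T\Sigma w_i$, $w_i=We_i$. Define $\nu=\tfrac12\big(\tfrac1{2-\rho}+\tfrac1{2+\rho}\big)$ and $\eta=\tfrac12\big(\tfrac1{2-\rho}-\tfrac1{2+\rho}\big)$. 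*)

(* matrices over an abstract real field. Agents 1,2,3 are indices 0,1,2. *)
From HB Require Import structures.
From mathcomp Require Import all_boot all_order all_algebra.
Set Implicit Arguments. Unset Strict Implicit. Unset Printing Implicit Defensive.
Import Order.TTheory GRing.Theory Num.Theory.
Local Open Scope ring_scope.

Section Model.
Variable R : realFieldType.

(* true beliefs M: column i is agent i's belief vector *)
Definition trueM (m a : R) : 'M[R]_3 :=
  \matrix_(i < 3, j < 3)
    if ((i : nat) == 0%N) && (((j : nat) == 1%N) || ((j : nat) == 2%N)) then a
    else if ((j : nat) == 0%N) && (((i : nat) == 1%N) || ((i : nat) == 2%N)) then m
    else 0.

Definition Sigma (rho : R) : 'M[R]_3 :=
  \matrix_(i < 3, j < 3)
    if i == j then 1
    else if (((i : nat) == 1%N) && ((j : nat) == 2%N)) ||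
            (((i : nat) == 2%N) && ((j : nat) == 1%N)) then rho
    else 0.

Definition Gamma : 'M[R]_3 := 1%:M.

(* restricted reports: M'_{21}=M'_{31}=mt, M'_{12}=at, M'_{13}=bt, rest 0 *)
Definition reportM (mt at_ bt : R) : 'M[R]_3 :=
  \matrix_(i < 3, j < 3)
    if ((j : nat) == 0%N) && (((i : nat) == 1%N) || ((i : nat) == 2%N)) then mt
    else if ((i : nat) == 0%N) && ((j : nat) == 1%N) then at_
    else if ((i : nat) == 0%N) && ((j : nat) == 2%N) then bt
    else 0.

Definition stable_point (rho : R) (M' W P : 'M[R]_3) : Prop :=
  W^T = W /\ P^T = - P /\ M' - P = 2%:R *: (Sigma rho *m W *m Gamma).

Definition g (m a rho : R) (i : 'I_3) (W P : 'M[R]_3) : R :=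
  let w := col i W in
  ((w^T *m (col i (trueM m a) - col i P)) - (w^T *m Sigma rho *m w)) ord0 ord0.

(* u is agent i's utility when the reported matrix is M' (evaluated at the
   stable point for M', which is unique) *)
Definition util (m a rho : R) (i : 'I_3) (M' : 'M[R]_3) (u : R) : Prop :=
  exists W P, stable_point rho M' W P /\ u = g m a rho i W P.

Definition idx1 : 'I_3 := @Ordinal 3 1 isT.
Definition idx2 : 'I_3 := @Ordinal 3 2 isT.

Definition best_response2 (m a rho mt x y : R) : Prop :=
  exists u, util m a rho idx1 (reportM mt x y) u /\
    forall x' u', util m a rho idx1 (reportM mt x' y) u' -> u' <= u.

Definition best_response3 (m a rho mt x y : R) : Prop :=
  exists u, util m a rho idx2 (reportM mt x y) u /\
    forall y' u', util m a rho idx2 (reportM mt x y') u' -> u' <= u.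

Definition nash_funds (m a rho mt x y : R) : Prop :=
  best_response2 m a rho mt x y /\ best_response3 m a rho mt x y.

End Model.

From HB Require Import structures.
From mathcomp Require Import all_boot all_order all_algebra.
From mathcomp Require Import ring lra.
Set Implicit Arguments. Unset Strict Implicit. Unset Printing Implicit Defensive.
Import Order.TTheory GRing.Theory Num.Theory.
Local Open Scope ring_scope.

(* For fixed reports the stable point is unique and explicit: the funds hold
   nothing of each other's assets, and their holdings of the investor's asset
   solve a 2x2 system with matrix [[2, rho], [rho, 2]], whose inverse has
   entries nu and -eta.  Hence fund 2's utility is a concave quadratic in its
   own report, and its best response to fund 3's report y is the affine map
   c + s y (symmetrically for fund 3).  An equilibrium solves x = c + s y,
   y = c + s x, and |s| < 1 forces x = y = c / (1 - s). *)

Notation i0 := (@Ordinal 3 0 isT).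
Notation i1 := (@Ordinal 3 1 isT).
Notation i2 := (@Ordinal 3 2 isT).

Lemma ord3P (i : 'I_3) : [\/ i = i0, i = i1 | i = i2].
Proof.
by case: i => [[|[|[|//]]] ?]; [constructor 1 | constructor 2 | constructor 3];
  apply: val_inj.
Qed.

Lemma sum_ord3 (R : nmodType) (F : 'I_3 -> R) :
  \sum_(k < 3) F k = F i0 + F i1 + F i2.
Proof.
rewrite !big_ord_recr big_ord0 /= add0r.
by congr (F _ + F _ + F _); apply: val_inj.
Qed.

Lemma argmax_concave_quadratic (R : realDomainType) (f : R -> R) (k v x : R) :
  0 < k -> (forall z, f v - f z = k * (z - v) ^+ 2) ->
  (forall z, f z <= f x) <-> x = v.
Proof.
move=> k_gt0 fE; split => [fx_max | -> z]; last first.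
  by rewrite -subr_ge0 fE; apply: mulr_ge0; [exact: ltW | exact: sqr_ge0].
have : k * (x - v) ^+ 2 <= 0 by rewrite -fE subr_le0 fx_max.
rewrite pmulr_rle0 // => sq_le0.
have : (x - v) ^+ 2 == 0 by rewrite eq_le sq_le0 sqr_ge0.
by rewrite sqrf_eq0 subr_eq0 => /eqP.
Qed.

Lemma argmax_graph_iff (T : Type) (R : numDomainType) (U : T -> R -> Prop)
    (f : T -> R) (x : T) :
  (forall x' u, U x' u <-> u = f x') ->
  (exists u, U x u /\ forall x' u', U x' u' -> u' <= u) <->
  (forall x', f x' <= f x).
Proof.
move=> UE; split => [[u [/UE -> u_max]] x' | f_max].
  by apply: u_max; apply/UE.
by exists (f x); split => [|x' u' /UE ->]; [apply/UE | apply: f_max].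
Qed.

Lemma symmetric_affine_fixpoint (R : fieldType) (c s x y : R) :
  1 - s != 0 -> 1 + s != 0 ->
  (x = c + s * y /\ y = c + s * x) <-> (x = c / (1 - s) /\ y = c / (1 - s)).
Proof.
move=> s1m s1p; split => [[ex ey] | [-> ->]]; last by split; field.
have /eqP : (1 + s) * (x - y) = 0.
  have -> : (1 + s) * (x - y) = (x - (c + s * y)) - (y - (c + s * x)) by ring.
  by rewrite -ex -ey !subrr.
rewrite mulf_eq0 (negbTE s1p) subr_eq0 /= => /eqP exy.
suff xE : x = c / (1 - s) by rewrite -exy.
apply: (canRL (mulfK s1m)); rewrite mulrBr mulr1 {1}ex -exy; ring.
Qed.

Section Model.
Variable R : realFieldType.
Implicit Types (rho mt a x y z : R).

Definition nu rho := ((2 - rho)^-1 + (2 + rho)^-1) / 2.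
Definition eta rho := ((2 - rho)^-1 - (2 + rho)^-1) / 2.

Lemma nu_sub_eta rho : nu rho - eta rho = (2 + rho)^-1.
Proof. by rewrite /nu /eta; move: (2 - rho)^-1 (2 + rho)^-1 => p q; field. Qed.

Lemma sigma_block_solve rho : 2 - rho != 0 -> 2 + rho != 0 -> forall u v p q,
  (2 * u + rho * v = p /\ rho * u + 2 * v = q) <->
  (u = nu rho * p - eta rho * q /\ v = nu rho * q - eta rho * p).
Proof.
move=> rho2m rho2p u v p q; split => [[<- <-] | [-> ->]];
  by split; rewrite /nu /eta; field; rewrite rho2m rho2p.
Qed.

Lemma inv_between_third_one (d : R) : 1 < d < 3 -> 1 / 3 < d^-1 < 1.
Proof.
case/andP => d_gt1 d_lt3.
have dVd : d^-1 * d = 1 by rewrite mulVf //; apply/eqP; lra.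
have dV_gt0 : 0 < d^-1 by rewrite invr_gt0; lra.
apply/andP; split; nra.
Qed.

Lemma slope_bounds {rho} : -1 < rho < 1 ->
  0 < nu rho * (2 - nu rho) /\
  -1 < eta rho * (1 - nu rho) / (nu rho * (2 - nu rho)) < 1.
Proof.
case/andP => rho_gtN1 rho_lt1.
have /andP[p_gt p_lt] : 1 / 3 < (2 - rho)^-1 < 1 by apply: inv_between_third_one; lra.
have /andP[q_gt q_lt] : 1 / 3 < (2 + rho)^-1 < 1 by apply: inv_between_third_one; lra.
have k_gt0 : 0 < nu rho * (2 - nu rho) by rewrite /nu; nra.
split=> //; rewrite ltr_pdivrMr // ltr_pdivlMr //.
by apply/andP; split; rewrite /nu /eta; nra.
Qed.

(* W_{12} at the stable point for reports (x, y): fund 2's holding of the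
   investor's asset (fund 3's is obtained by swapping x and y). *)
Definition holding rho mt x y := nu rho * ((x + mt) / 2) - eta rho * ((y + mt) / 2).

Definition stable_W rho mt x y : 'M[R]_3 := \matrix_(i < 3, j < 3)
  if (((i : nat) == 0%N) && ((j : nat) == 1%N)) ||
     (((i : nat) == 1%N) && ((j : nat) == 0%N)) then holding rho mt x y
  else if (((i : nat) == 0%N) && ((j : nat) == 2%N)) ||
          (((i : nat) == 2%N) && ((j : nat) == 0%N)) then holding rho mt y x
  else 0.

Definition stable_P rho mt x y : 'M[R]_3 := \matrix_(i < 3, j < 3)
  if ((i : nat) == 0%N) && ((j : nat) == 1%N) then x - 2 * holding rho mt x y
  else if ((i : nat) == 1%N) && ((j : nat) == 0%N) then 2 * holding rho mt x y - x
  else if ((i : nat) == 0%N) && ((j : nat) == 2%N) then y - 2 * holding rho mt y x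
  else if ((i : nat) == 2%N) && ((j : nat) == 0%N) then 2 * holding rho mt y x - y
  else 0.

(* g_2 for w_2 = (b, 0, 0), mu_2 = (a, 0, 0) and P_{12} = x - 2 b. *)
Definition fund_payoff (b a x : R) := b * (a - x + b).

Definition best_reply rho a mt y :=
  (a * nu rho - mt * (nu rho - eta rho) * (1 - nu rho) + eta rho * (1 - nu rho) * y)
  / (nu rho * (2 - nu rho)).

Lemma fund_payoff_quadratic rho a mt y z : nu rho * (2 - nu rho) != 0 ->
  fund_payoff (holding rho mt (best_reply rho a mt y) y) a (best_reply rho a mt y)
  - fund_payoff (holding rho mt z y) a z
  = nu rho * (2 - nu rho) / 4 * (z - best_reply rho a mt y) ^+ 2.
Proof.
rewrite mulf_eq0 negb_or => /andP[nu_neq0 nu2_neq0].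
by rewrite /fund_payoff /holding /best_reply; field; rewrite nu_neq0 nu2_neq0.
Qed.

Variable rho : R.
Hypothesis rho_bounds : -1 < rho < 1.

Let rho2m : 2 - rho != 0. Proof. by case/andP: rho_bounds => *; apply/eqP; lra. Qed.
Let rho2p : 2 + rho != 0. Proof. by case/andP: rho_bounds => *; apply/eqP; lra. Qed.

Lemma holding_system mt x y :
  2 * holding rho mt x y + rho * holding rho mt y x = (x + mt) / 2 /\
  rho * holding rho mt x y + 2 * holding rho mt y x = (y + mt) / 2.
Proof. exact/(sigma_block_solve rho2m rho2p). Qed.

Lemma stable_point_reportM mt x y :
  stable_point rho (reportM mt x y) (stable_W rho mt x y) (stable_P rho mt x y).
Proof.
have [sys1 sys2] := holding_system mt x y.
split; [|split]; apply/matrixP => i j;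
  by case: (ord3P i) (ord3P j) => -> [] ->;
     rewrite /Gamma ?mulmx1 !mxE ?sum_ord3 ?mxE /=; lra.
Qed.

Lemma stable_point_reportM_uniq mt x y (W P : 'M[R]_3) :
  stable_point rho (reportM mt x y) W P ->
  W = stable_W rho mt x y /\ P = stable_P rho mt x y.
Proof.
case=> W_sym [P_skew WP_eq].
have eW i j : W i j = W j i by rewrite -{1}W_sym mxE.
have eP i j : P i j = - P j i by rewrite -{1}(opprK P) -P_skew !mxE.
have P_diag i : P i i = 0 by have := eP i i; lra.
have E i j : (reportM mt x y - P) i j = (2%:R *: (Sigma rho *m W)) i j.
  by rewrite WP_eq /Gamma mulmx1.
move: (E i0 i0) (E i0 i1) (E i0 i2) (E i1 i0) (E i1 i1) (E i1 i2)
      (E i2 i0) (E i2 i1) (E i2 i2).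
rewrite !mxE !sum_ord3 !mxE /= (eW i1 i0) (eW i2 i0) (eW i2 i1).
rewrite (eP i1 i0) (eP i2 i0) (eP i2 i1) !P_diag.
move=> E00 E01 E02 E10 E11 E12 E20 E21 E22.
have [w01 w02] : W i0 i1 = holding rho mt x y /\ W i0 i2 = holding rho mt y x.
  by apply/(sigma_block_solve rho2m rho2p); split; lra.
case/andP: rho_bounds => rho_gtN1 rho_lt1.
have w11 : W i1 i1 = - rho * W i1 i2 by lra.
have w22 : W i2 i2 = - rho * W i1 i2 by lra.
have w12 : W i1 i2 = 0.
  have : W i1 i2 * (1 - rho ^+ 2) = 0.
    by move: E12 E21; rewrite w11 w22 expr2; lra.
  have rho_sq : 1 - rho ^+ 2 != 0 by apply/eqP; rewrite expr2; nra.
  by move/eqP; rewrite mulf_eq0 (negbTE rho_sq) orbF => /eqP.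
rewrite w12 mulr0 in w11 w22.
have p12 : P i1 i2 = 0 by move: E12; rewrite w12 w22 mulr0; lra.
split; apply/matrixP => i j;
  by case: (ord3P i) (ord3P j) => -> [] ->;
     rewrite ?mxE /= ?(eW i1 i0) ?(eW i2 i0) ?(eW i2 i1) ?(eP i1 i0)
       ?(eP i2 i0) ?(eP i2 i1) ?P_diag; lra.
Qed.

Lemma util_reportM m a i mt x y u :
  util m a rho i (reportM mt x y) u <->
  u = g m a rho i (stable_W rho mt x y) (stable_P rho mt x y).
Proof.
split => [[W [P [/stable_point_reportM_uniq [-> ->] ->]]] // | ->].
by exists (stable_W rho mt x y), (stable_P rho mt x y); split;
  first exact: stable_point_reportM.
Qed.

Lemma g_stable_fund2 m a mt x y :
  g m a rho idx1 (stable_W rho mt x y) (stable_P rho mt x y)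
  = fund_payoff (holding rho mt x y) a x.
Proof. by rewrite /g /fund_payoff !mxE !sum_ord3 !mxE !sum_ord3 !mxE /=; ring. Qed.

Lemma g_stable_fund3 m a mt x y :
  g m a rho idx2 (stable_W rho mt x y) (stable_P rho mt x y)
  = fund_payoff (holding rho mt y x) a y.
Proof. by rewrite /g /fund_payoff !mxE !sum_ord3 !mxE !sum_ord3 !mxE /=; ring. Qed.

Lemma best_reply_argmax a mt y x :
  (forall z, fund_payoff (holding rho mt z y) a z <= fund_payoff (holding rho mt x y) a x)
  <-> x = best_reply rho a mt y.
Proof.
have [nu_gt0 _] := slope_bounds rho_bounds.
have k_gt0 : 0 < nu rho * (2 - nu rho) / 4 by rewrite divr_gt0.
apply: (argmax_concave_quadratic
  (f := fun z => fund_payoff (holding rho mt z y) a z) _ k_gt0) => z.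
by apply: fund_payoff_quadratic; rewrite gt_eqF.
Qed.

Lemma best_response2_iff m a mt x y :
  best_response2 m a rho mt x y <-> x = best_reply rho a mt y.
Proof.
rewrite -best_reply_argmax.
apply: (argmax_graph_iff (U := fun x' => util m a rho idx1 (reportM mt x' y))) => x' u.
by rewrite util_reportM g_stable_fund2.
Qed.

Lemma best_response3_iff m a mt x y :
  best_response3 m a rho mt x y <-> y = best_reply rho a mt x.
Proof.
rewrite -best_reply_argmax.
apply: (argmax_graph_iff (U := fun y' => util m a rho idx2 (reportM mt x y'))) => y' u.
by rewrite util_reportM g_stable_fund3.
Qed.

End Model.

Theorem mainTheorem13 (R : realFieldType) (m a rho mt : R)
  (hrho : -1 < rho < 1) :
  let nu := (((2 - rho)^-1 + (2 + rho)^-1) / 2) in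
  let eta := (((2 - rho)^-1 - (2 + rho)^-1) / 2) in
  let alpha := mt / (2 + rho) in
  let c := (a * nu - alpha * (1 - nu)) / (nu * (2 - nu)) in
  let s := (eta * (1 - nu)) / (nu * (2 - nu)) in
  c / (1 - s) = (a * nu - mt * (1 - nu) * (nu - eta)) / (nu + (1 - nu) * (nu - eta))
  /\ (forall x y : R, nash_funds m a rho mt x y <-> (x = c / (1 - s) /\ y = c / (1 - s))).
Proof.
move=> nu_r eta_r alpha c s.
rewrite {}/c {}/s {}/alpha {}/nu_r {}/eta_r -/(nu rho) -/(eta rho).
set k := nu rho * (2 - nu rho).
set s := eta rho * (1 - nu rho) / k.
set c := (a * nu rho - mt / (2 + rho) * (1 - nu rho)) / k.
have [k_gt0 /andP[s_gtN1 s_lt1]] : 0 < k /\ -1 < s < 1 := slope_bounds hrho.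
have [nu_neq0 nu2_neq0] : nu rho != 0 /\ 2 - nu rho != 0.
  by apply/andP; rewrite -negb_or -mulf_eq0 gt_eqF.
have alphaE : mt / (2 + rho) = mt * (nu rho - eta rho) by rewrite nu_sub_eta.
have best_replyE z : best_reply rho a mt z = c + s * z.
  by rewrite /best_reply /c /s /k alphaE; field; rewrite nu_neq0 nu2_neq0.
have den_neq0 : nu rho + (1 - nu rho) * (nu rho - eta rho) != 0.
  have -> : nu rho + (1 - nu rho) * (nu rho - eta rho) = k * (1 - s).
    by rewrite /s /k; field; rewrite nu_neq0 nu2_neq0.
  by rewrite mulf_neq0 // gt_eqF // subr_gt0.
split.
  by rewrite /c /s /k alphaE; field; rewrite den_neq0 nu_neq0 nu2_neq0.
move=> x y; rewrite /nash_funds (best_response2_iff hrho) (best_response3_iff hrho).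
by rewrite !best_replyE; apply: symmetric_affine_fixpoint; apply/eqP; lra.
Qed.
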